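(* There is an absolute constant $c>0$ such that the following holds. Let $f^{(1)},\dots,f^{(n)}:\{\pm1\}^d\to\{\pm1\}$ and let $\mathcal{H}$ be a class of functions $\{\pm1\}^d\to\{\pm1\}$ satisfying the $\Gamma$-simultaneous weak-learning assumption for $f^{(1)},\dots,f^{(n)}$, with $\Gamma\in(0,1]$. Let $\varepsilon\in(0,1)$ and let $S^{(1)},\dots,S^{(n)}$ be samples of size $m$ with $S^{(i)}=\{(x^{(i)}_j,f^{(i)}(x^{(i)}_j))\}_{j\in[m]}$. Then for $t\ge c\log(1/\varepsilon)/\Gamma$, the output $h^{(1)},\dots,h^{(n)}$ of $\textsc{Boost}(S^{(1)},\dots,S^{(n)},\mathcal{H},t)$ satisfies $$\frac{1}{nm}\sum_{i\in[n]}\sum_{j\in[m]}\mathbf{1}\big[\mathrm{sign}(h^{(i)}(x^{(i)}_j))\neq f^{(i)}(x^{(i)}_j)\big]\le\varepsilon.$$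
   Context: A class $\mathcal{H}$ satisfies the $\Gamma$-simultaneous weak-learning assumption for $f^{(1)},\dots,f^{(n)}$ if for all distributions $D^{(1)},\dots,D^{(n)}$ over $\{\pm1\}^d$ and all nonnegative weights $w_1,\dots,w_n$ there exists $h\in\mathcal{H}$ with $\sum_{i=1}^n w_i\,\mathbb{E}_{x\sim D^{(i)}}[f^{(i)}(x)h(x)]^2\ge\Gamma\sum_{i=1}^n w_i$. Algorithm $\textsc{Boost}(S^{(1)},\dots,S^{(n)},\mathcal{H},t)$, where $S^{(i)}=\{(x^{(i)}_j,y^{(i)}_j)\}_{j\in[m]}$: initialize real-valued functions $h^{(1)},\dots,h^{(n)}$ to the constant $0$. Repeat $t$ times: (1) for each $i\in[n],j\in[m]$ set $w^{(i)}_j=\exp(-y^{(i)}_j h^{(i)}(x^{(i)}_j))$ and $W^{(i)}=\sum_{j\in[m]}w^{(i)}_j$; (2) choose $h^\star\in\arg\max_{h\in\mathcal{H}}\sum_{i\in[n]}W^{(i)}\big(\sum_{j\in[m]}\frac{w^{(i)}_j}{W^{(i)}}y^{(i)}_jh(x^{(i)}_j)\big)^2$; (3) for each $i\in[n]$, update $h^{(i)}\leftarrow h^{(i)}+\alpha^{(i)}h^\star$ with $\alpha^{(i)}=\frac12\ln\Big(\frac{\sum_j w^{(i)}_j\mathbf{1}[y^{(i)}_j=h^\star(x^{(i)}_j)]}{\sum_j w^{(i)}_j\mathbf{1}[y^{(i)}_j\neq h^\star(x^{(i)}_j)]}\Big)$. Output $h^{(1)},\dots,h^{(n)}$. *)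

From mathcomp Require Import all_boot all_order all_algebra.
From mathcomp Require Import all_classical all_reals all_analysis.
From mathcomp Require Import Rstruct.
Set Implicit Arguments. Unset Strict Implicit. Unset Printing Implicit Defensive.
Import Order.TTheory GRing.Theory Num.Theory.
Local Open Scope ring_scope.

Notation RR := Rdefinitions.R.

(* The hypercube {+-1}^d, a point being a vector of d signs. *)
Definition cube (d : nat) := {ffun 'I_d -> bool}.

Definition pm1 (d : nat) (g : cube d -> RR) : Prop :=
  forall z, g z = 1 \/ g z = -1.

Definition distribution (d : nat) (D : cube d -> RR) : Prop :=
  (forall z, 0 <= D z) /\ \sum_z D z = 1.

Definition corr (d : nat) (D f h : cube d -> RR) : RR :=
  \sum_z D z * (f z * h z).

Definition simultaneous_weak_learning (d n : nat)
    (H : (cube d -> RR) -> Prop) (f : 'I_n -> cube d -> RR) (Gamma : RR) : Prop :=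
  forall (D : 'I_n -> cube d -> RR) (w : 'I_n -> RR),
    (forall i, distribution (D i)) -> (forall i, 0 <= w i) ->
    exists h, H h /\
      \sum_(i < n) w i * (corr (D i) (f i) h) ^+ 2 >= Gamma * \sum_(i < n) w i.

Section Boost.
Variables (d n m : nat).
Variable (x : 'I_n -> 'I_m -> cube d).
Variable (y : 'I_n -> 'I_m -> RR).

Definition bweight (h : 'I_n -> cube d -> RR) (i : 'I_n) (j : 'I_m) : RR :=
  expR (- (y i j * h i (x i j))).

Definition btotal (h : 'I_n -> cube d -> RR) (i : 'I_n) : RR :=
  \sum_(j < m) bweight h i j.

Definition bcorrect (h : 'I_n -> cube d -> RR) (g : cube d -> RR) (i : 'I_n) : RR :=
  \sum_(j < m) bweight h i j * (y i j == g (x i j))%:R.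

Definition bincorrect (h : 'I_n -> cube d -> RR) (g : cube d -> RR) (i : 'I_n) : RR :=
  \sum_(j < m) bweight h i j * (y i j != g (x i j))%:R.

Definition bobjective (h : 'I_n -> cube d -> RR) (g : cube d -> RR) : RR :=
  \sum_(i < n) btotal h i *
    (\sum_(j < m) (bweight h i j / btotal h i) * y i j * g (x i j)) ^+ 2.

Definition balpha (h : 'I_n -> cube d -> RR) (g : cube d -> RR) (i : 'I_n) : RR :=
  2^-1 * ln (bcorrect h g i / bincorrect h g i).

(* functions h^(1..n) after k rounds, given the hypotheses hs 0, ..., hs (k-1)
   chosen in rounds 1..k *)
Fixpoint bstate (hs : nat -> cube d -> RR) (k : nat) : 'I_n -> cube d -> RR :=
  match k with
  | 0 => fun _ _ => 0
  | k'.+1 => fun i z =>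
      bstate hs k' i z + balpha (bstate hs k') (hs k') i * hs k' z
  end.

(* hs is a valid sequence of choices of an execution of Boost for t rounds:
   each chosen hypothesis is in H and maximizes the objective (any tie-breaking),
   and every step size alpha^(i) is a well-defined real number (both the
   weighted-correct and weighted-incorrect masses are positive). *)
Definition boost_run (H : (cube d -> RR) -> Prop) (t : nat)
    (hs : nat -> cube d -> RR) : Prop :=
  forall k, (k < t)%N ->
    [/\ H (hs k),
        (forall g, H g -> bobjective (bstate hs k) g <= bobjective (bstate hs k) (hs k)),
        (forall i, 0 < bcorrect (bstate hs k) (hs k) i) &
        (forall i, 0 < bincorrect (bstate hs k) (hs k) i)].

Definition training_error (h : 'I_n -> cube d -> RR) : RR :=
  (n * m)%:R^-1 *
    \sum_(i < n) \sum_(j < m) (Num.sg (h i (x i j)) != y i j)%:R.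

End Boost.

From Pilot Require Import Defs.
From mathcomp Require Import all_boot all_order all_algebra.
From mathcomp Require Import all_classical all_reals all_analysis.
From mathcomp Require Import Rstruct.
From mathcomp Require Import ring lra.
Set Implicit Arguments. Unset Strict Implicit. Unset Printing Implicit Defensive.
Import Order.TTheory GRing.Theory Num.Theory.
Local Open Scope ring_scope.

(* The potential is the total exponential loss Phi = sum_i W^(i), which bounds
   nm times the training error.  In a round, writing C, I for the weighted
   masses where h* is right / wrong and s = (C - I) / W, the step alpha makes
   W^(i) become 2 sqrt(C I) = W sqrt(1 - s^2) <= W (1 - s^2 / 2).  Summing over
   i, Phi drops by half the objective of h*, which by the weak-learning
   assumption (applied to the normalized weights) is at least Gamma Phi.  Hence
   Phi_t <= nm (1 - Gamma/2)^t <= nm exp(-Gamma t / 2), so c = 2 works. *)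

Lemma pm1_mul_eq (a b : RR) : (a = 1 \/ a = -1) -> (b = 1 \/ b = -1) ->
  a * b = (a == b)%:R - (a != b)%:R.
Proof.
have n1m1 : ((1 : RR) == -1) = false by apply/negP => /eqP; lra.
have m1n1 : ((-1 : RR) == 1) = false by apply/negP => /eqP; lra.
by move=> [->|->] [->|->]; rewrite ?eqxx ?n1m1 ?m1n1 /=; lra.
Qed.

Lemma sum_delta_mul (T : finType) (a : T) (F : T -> RR) :
  \sum_z (a == z)%:R * F z = F a.
Proof.
rewrite (bigD1 a) //= eqxx mul1r big1 ?addr0 // => z za.
by rewrite eq_sym (negbTE za) mul0r.
Qed.

Lemma sgr_neq_le_expR (a h : RR) : (a = 1 \/ a = -1) ->
  ((Num.sg h != a)%:R : RR) <= expR (- (a * h)).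
Proof.
move=> a_pm1; case: eqP => [_|sg_ne] /=; first exact: expR_ge0.
suff : 0 <= - (a * h) by have := expR_ge1Dx (- (a * h)); lra.
case: a_pm1 sg_ne => -> sg_ne.
- have : ~~ (0 < h) by rewrite -sgr_cp0; apply/eqP.
  by rewrite -leNgt; lra.
- have : ~~ (h < 0) by rewrite -sgr_cp0; apply/eqP.
  by rewrite -leNgt; lra.
Qed.

(* With u := expR a we have C = I u^2, so both terms equal sqrt(C I) and the
   gap is I (u - 1)^4 / (2 (u^2 + 1)). *)
Lemma exp_loss_balanced_step_le (C I : RR) : 0 < C -> 0 < I ->
  C * expR (- (2^-1 * ln (C / I))) + I * expR (2^-1 * ln (C / I))
    <= (C + I) - (C + I) * ((C - I) / (C + I)) ^+ 2 / 2.
Proof.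
move=> C0 I0; set a := 2^-1 * _; rewrite expRN; set u := expR a.
have u0 : 0 < u := expR_gt0 a.
have u2_pos : 0 < u ^+ 2 + 1 by have := sqr_ge0 u; lra.
have C_eq : C = I * u ^+ 2.
  rewrite expr2 -exp.expRD (_ : a + a = ln (C / I)); last by rewrite /a; field.
  by rewrite lnK ?posrE ?divr_gt0 //; field; rewrite gt_eqF.
rewrite C_eq -subr_ge0.
have W0 : I * u ^+ 2 + I != 0 by apply: lt0r_neq0; have := sqr_ge0 u; nra.
have -> : I * u ^+ 2 + I - (I * u ^+ 2 + I) * ((I * u ^+ 2 - I) / (I * u ^+ 2 + I)) ^+ 2 / 2
    - (I * u ^+ 2 * u^-1 + I * u) = I * (u ^+ 2 + 1 - 2 * u) ^+ 2 / (2 * (u ^+ 2 + 1)).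
  by field; rewrite W0 (lt0r_neq0 u2_pos) (lt0r_neq0 u0).
by apply: divr_ge0; [apply: mulr_ge0; [lra | apply: sqr_ge0] | lra].
Qed.

Lemma one_sub_half_expn_le (G eps : RR) (t : nat) :
  0 < G -> G <= 2 -> 0 < eps -> 2 * ln eps^-1 / G <= t%:R ->
  (1 - G / 2) ^+ t <= eps.
Proof.
move=> G0 G2 eps0 ht.
apply: (@le_trans _ _ (expR (- (G / 2)) ^+ t)).
  apply: lerXn2r; rewrite ?nnegrE; [lra | exact: expR_ge0 |].
  by have := expR_ge1Dx (- (G / 2)); lra.
rewrite -expRM_natl -[leRHS](lnK (x := eps)) ?posrE // ler_expR.
by rewrite ler_pdivrMr // lnV ?posrE // in ht; lra.
Qed.

Section Potential.
Variables (d n m : nat) (x : 'I_n -> 'I_m -> cube d) (y : 'I_n -> 'I_m -> RR).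
Hypothesis y_pm1 : forall i j, y i j = 1 \/ y i j = -1.

Definition potential (h : 'I_n -> cube d -> RR) : RR := \sum_(i < n) btotal x y h i.

Lemma btotal_split h g i : btotal x y h i = bcorrect x y h g i + bincorrect x y h g i.
Proof.
rewrite /btotal /bcorrect /bincorrect -big_split; apply: eq_bigr => j _.
by case: eqP => _ /=; rewrite ?mulr1 ?mulr0 ?addr0 ?add0r.
Qed.

Lemma weighted_corr_eq h g i : pm1 g ->
  \sum_(j < m) (bweight x y h i j / btotal x y h i) * y i j * g (x i j)
  = (bcorrect x y h g i - bincorrect x y h g i) / btotal x y h i.
Proof.
move=> g_pm1; rewrite /bcorrect /bincorrect -sumrB mulr_suml.
apply: eq_bigr => j _; rewrite -mulrA (pm1_mul_eq (y_pm1 i j) (g_pm1 _)); ring.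
Qed.

Lemma bweight_bstateS hs k i j :
  bweight x y (bstate x y hs k.+1) i j =
  bweight x y (bstate x y hs k) i j *
  expR (- (balpha x y (bstate x y hs k) (hs k) i * (y i j * hs k (x i j)))).
Proof. by rewrite /bweight /= -exp.expRD; congr expR; ring. Qed.

Lemma btotal_bstateS hs k i : pm1 (hs k) ->
  let a := balpha x y (bstate x y hs k) (hs k) i in
  btotal x y (bstate x y hs k.+1) i =
  bcorrect x y (bstate x y hs k) (hs k) i * expR (- a)
  + bincorrect x y (bstate x y hs k) (hs k) i * expR a.
Proof.
move=> g_pm1 a; rewrite /btotal /bcorrect /bincorrect !mulr_suml -big_split.
apply: eq_bigr => j _; rewrite bweight_bstateS (pm1_mul_eq (y_pm1 i j) (g_pm1 _)).
by case: eqP => _ /=; rewrite ?mulr1 ?mulr0 ?subr0 ?sub0r ?mulrN1 ?opprK ?mul0r ?addr0 ?add0r ?mulr1.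
Qed.

Lemma potential_bstateS_le hs k : pm1 (hs k) ->
  (forall i, 0 < bcorrect x y (bstate x y hs k) (hs k) i) ->
  (forall i, 0 < bincorrect x y (bstate x y hs k) (hs k) i) ->
  potential (bstate x y hs k.+1)
    <= potential (bstate x y hs k) - bobjective x y (bstate x y hs k) (hs k) / 2.
Proof.
move=> g_pm1 C0 I0; rewrite /potential /bobjective mulr_suml -sumrB.
apply: ler_sum => i _; rewrite btotal_bstateS // weighted_corr_eq //.
by rewrite (btotal_split _ (hs k)); exact: exp_loss_balanced_step_le.
Qed.

Lemma potential_bstate0 hs : potential (bstate x y hs 0) = (n * m)%:R.
Proof.
rewrite /potential /btotal /bweight /=.
under eq_bigr do under eq_bigr do rewrite mulr0 oppr0 exp.expR0.
by rewrite (eq_bigr (fun _ => m%:R)) => [|i _]; rewrite sumr_const card_ord // natrM mulr_natl.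
Qed.

Lemma training_error_le_potential h :
  training_error x y h <= (n * m)%:R^-1 * potential h.
Proof.
apply: ler_wpM2l; first by rewrite invr_ge0 ler0n.
by apply: ler_sum => i _; apply: ler_sum => j _; exact: sgr_neq_le_expR.
Qed.

End Potential.

Section WeakLearning.
Variables (d n m : nat) (x : 'I_n -> 'I_m -> cube d) (f : 'I_n -> cube d -> RR).
Variables (H : (cube d -> RR) -> Prop) (Gamma : RR).
Hypothesis f_pm1 : forall i, pm1 (f i).
Hypothesis H_pm1 : forall h, H h -> pm1 h.
Hypothesis weak_learning : simultaneous_weak_learning H f Gamma.

Local Notation y := (fun i j => f i (x i j)).

(* The objective of g is the weak-learning sum for the weights W^(i) and the
   distributions D^(i) obtained by normalizing the sample weights. *)
Lemma weak_learning_bobjective h : (forall i, 0 < btotal x y h i) ->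
  exists g, H g /\ Gamma * potential x y h <= bobjective x y h g.
Proof.
move=> W0.
pose D i (z : cube d) := \sum_(j < m) (x i j == z)%:R * (bweight x y h i j / btotal x y h i).
have D_distr i : Defs.distribution (D i).
  split=> [z|]; first by apply: sumr_ge0 => j _; rewrite mulr_ge0 ?ler0n ?divr_ge0 ?expR_ge0 ?ltW.
  rewrite exchange_big /=; under eq_bigr do rewrite sum_delta_mul.
  by rewrite -mulr_suml divff // gt_eqF ?W0.
have [g [Hg ge_Gamma]] := weak_learning D_distr (fun i => ltW (W0 i)).
exists g; split => //; rewrite (le_trans ge_Gamma) // le_eqVlt; apply/orP; left.
apply/eqP; apply: eq_bigr => i _; congr (_ * _ ^+ 2); rewrite /corr.
under eq_bigr do rewrite mulr_suml.
rewrite exchange_big /=; apply: eq_bigr => j _.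
by under eq_bigr do rewrite -mulrA; rewrite sum_delta_mul mulrA.
Qed.

Lemma potential_bstate_le t hs : Gamma <= 2 -> boost_run x y H t hs ->
  potential x y (bstate x y hs t) <= (n * m)%:R * (1 - Gamma / 2) ^+ t.
Proof.
have y_pm1 i j : y i j = 1 \/ y i j = -1 by exact: f_pm1.
move=> Gamma_le2 run; suff : forall k, (k <= t)%N ->
    potential x y (bstate x y hs k) <= (n * m)%:R * (1 - Gamma / 2) ^+ k by apply.
elim=> [_|k IH kt]; first by rewrite potential_bstate0 expr0 mulr1.
have [Hk maxk C0 I0] := run k kt.
have W0 i : 0 < btotal x y (bstate x y hs k) i.
  by rewrite (btotal_split x y _ (hs k)) addr_gt0.
have [g [Hg Gamma_le]] := weak_learning_bobjective W0.
have decay : potential x y (bstate x y hs k.+1)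
    <= (1 - Gamma / 2) * potential x y (bstate x y hs k).
  apply: (le_trans (potential_bstateS_le y_pm1 (H_pm1 Hk) C0 I0)).
  rewrite mulrBl mul1r lerD2l lerN2 mulrAC ler_pM2r ?invr_gt0 ?ltr0n //.
  exact: le_trans Gamma_le (maxk g Hg).
rewrite exprS mulrCA (le_trans decay) //.
by apply: ler_wpM2l; [lra | exact: IH (ltnW kt)].
Qed.

End WeakLearning.

Theorem mainTheorem4 :
  exists c : RR, 0 < c /\
  forall (d n m : nat) (f : 'I_n -> cube d -> RR)
         (H : (cube d -> RR) -> Prop) (Gamma eps : RR),
    (forall i, pm1 (f i)) ->
    (forall h, H h -> pm1 h) ->
    0 < Gamma -> Gamma <= 1 ->
    simultaneous_weak_learning H f Gamma ->
    0 < eps -> eps < 1 ->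
    forall (x : 'I_n -> 'I_m -> cube d) (t : nat) (hs : nat -> cube d -> RR),
      c * ln (eps^-1) / Gamma <= t%:R ->
      boost_run x (fun i j => f i (x i j)) H t hs ->
      training_error x (fun i j => f i (x i j))
        (bstate x (fun i j => f i (x i j)) hs t) <= eps.
Proof.
exists 2; split=> [|d n m f H Gamma eps f_pm1 H_pm1 Gamma0 Gamma1 wl eps0 _ x t hs ht run].
  lra.
have Gamma2 : Gamma <= 2 by lra.
have decay := potential_bstate_le f_pm1 H_pm1 wl Gamma2 run.
have nm_inv_le1 : (n * m)%:R^-1 * (n * m)%:R <= 1 :> RR.
  by case: (n * m)%N => [|k]; rewrite ?invr0 ?mul0r ?mulVf ?pnatr_eq0.
apply: (le_trans (training_error_le_potential x (fun i j => f_pm1 i (x i j)) _)).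
apply: le_trans (_ : _ <= (n * m)%:R^-1 * ((n * m)%:R * (1 - Gamma / 2) ^+ t)) _.
  by rewrite ler_wpM2l ?invr_ge0 ?ler0n.
rewrite mulrA (le_trans _ (one_sub_half_expn_le Gamma0 Gamma2 eps0 ht)) //.
by rewrite ler_piMl ?exprn_ge0 //; lra.
Qed.
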